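(* Consider the Lohe hermitian sphere model $$\dot z_j=\Omega_jz_j+\kappa_0\big(z_c\langle z_j,z_j\rangle-z_j\langle z_c,z_j\rangle\big)+\kappa_1\big(\langle z_j,z_c\rangle-\langle z_c,z_j\rangle\big)z_j,\qquad j=1,\dots,N.$$ Assume the following hold: - $\Omega_j=\Omega$ for all $j$, for a skew-hermitian $d\times d$ matrix $\Omega$; - $0<\kappa_1<\frac14\kappa_0$; - $|z_j^0|=1$ for all $j$; - $\rho^0>\frac{N-2}{N}$. Let $\{z_j\}$ be the global solution with $z_j(0)=z_j^0$. Then for all $i,j$, $\langle z_i(t),z_j(t)\rangle\to1$ exponentially fast as $t\to\infty$. In particular $\max_{i,j}|z_i(t)-z_j(t)|\to0$ exponentially fast.
   Context: Notation: - $\langle z,w\rangle=\sum_\alpha\overline{z_\alpha}w_\alpha$ on $\mathbb C^d$, and $|z|=\langle z,z\rangle^{1/2}$; - $z_c:=\frac1N\sum_kz_k$; - the $\Omega_j$ are skew-hermitian matrices; - $\kappa_0,\kappa_1$ are real coupling constants; - $\rho^0:=\big|\frac1N\sum_{j=1}^Nz_j^0\big|$. *)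

From Stdlib Require Import Reals.
From Coquelicot Require Import Coquelicot.
Open Scope R_scope.

(* Vectors of C^d are functions nat -> C; only the indices alpha < d matter. *)
Definition cvec := nat -> C.

Fixpoint csum (n : nat) (f : nat -> C) : C :=
  match n with
  | O => RtoC 0
  | S m => Cplus (csum m f) (f m)
  end.

Definition cinner (d : nat) (z w : cvec) : C :=
  csum d (fun a => Cmult (Cconj (z a)) (w a)).

Definition cnorm (d : nat) (z : cvec) : R := sqrt (fst (cinner d z z)).

Definition matvec (d : nat) (A : nat -> nat -> C) (z : cvec) : cvec :=
  fun a => csum d (fun b => Cmult (A a b) (z b)).

Definition skew_hermitian (d : nat) (A : nat -> nat -> C) : Prop :=
  forall a b, (a < d)%nat -> (b < d)%nat -> A a b = Copp (Cconj (A b a)).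

Definition centroid (N : nat) (z : nat -> cvec) : cvec :=
  fun a => Cmult (RtoC (/ INR N)) (csum N (fun k => z k a)).

Definition lohe_rhs (d N : nat) (Omega : nat -> nat -> C) (k0 k1 : R)
    (z : nat -> cvec) (j : nat) : cvec :=
  let zc := centroid N z in
  fun a =>
    Cplus (matvec d Omega (z j) a)
   (Cplus (Cmult (RtoC k0)
            (Cminus (Cmult (zc a) (cinner d (z j) (z j)))
                    (Cmult (z j a) (cinner d zc (z j)))))
          (Cmult (Cmult (RtoC k1) (Cminus (cinner d (z j) zc) (cinner d zc (z j))))
                 (z j a))).

(* Write g = |z_c|^2 for the squared order parameter and b_k = <z_c, z_k>.
   1. Omega is skew-hermitian and the coupling is tangential, so Re <z_j, z_j'> = 0:
      every |z_j| stays equal to 1.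
   2. The Omega-terms drop out of Re <z_c, z_c'> as well, which yields
        g' = (2/N) sum_k [k0 (g - Re b_k^2) + 2 k1 (Im b_k)^2],
      while sum_k Re b_k = N g and |b_k|^2 <= g (Cauchy-Schwarz).
   3. For such families g' >= 0, hence g >= rho0^2 forever, and an elementary
      inequality gives g' >= lam (1 - g) with lam = k0 rho0^2 (2 - N (1 - rho0)) > 0.
      A Gronwall argument yields 1 - g(t) <= (1 - rho0^2) exp (- lam t).
   4. For unit vectors |z_i - z_j|^2 <= 4 N (1 - g) and |<z_i, z_j> - 1| <= |z_i - z_j|. *)

From Stdlib Require Import Reals Lra Lia Psatz.
From Coquelicot Require Import Coquelicot.
Open Scope R_scope.

Ltac cring := apply injective_projections; simpl; ring.

Fixpoint rsum (n : nat) (f : nat -> R) : R :=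
  match n with O => 0 | S m => rsum m f + f m end.

Lemma rsum_ext n f g : (forall k, (k < n)%nat -> f k = g k) -> rsum n f = rsum n g.
Proof. induction n; intros H; simpl; auto. rewrite IHn, H; auto. Qed.

Lemma rsum_le n f g : (forall k, (k < n)%nat -> f k <= g k) -> rsum n f <= rsum n g.
Proof.
  induction n; intros H; simpl; [lra|].
  assert (rsum n f <= rsum n g) by (apply IHn; auto).
  assert (f n <= g n) by auto. lra.
Qed.

Lemma rsum_lin n a b f g :
  rsum n (fun k => a * f k + b * g k) = a * rsum n f + b * rsum n g.
Proof. induction n; simpl; [ring | rewrite IHn; ring]. Qed.

Lemma rsum_scal n c f : rsum n (fun k => c * f k) = c * rsum n f.
Proof. induction n; simpl; [ring | rewrite IHn; ring]. Qed.

Lemma rsum_const n c : rsum n (fun _ => c) = INR n * c.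
Proof. induction n; simpl rsum; [simpl; ring | rewrite IHn, S_INR; ring]. Qed.

Lemma rsum_nonneg n f : (forall k, (k < n)%nat -> 0 <= f k) -> 0 <= rsum n f.
Proof.
  intros H. rewrite <- (Rmult_0_r (INR n)), <- rsum_const. apply rsum_le; auto.
Qed.

Lemma rsum_term n f k :
  (forall i, (i < n)%nat -> 0 <= f i) -> (k < n)%nat -> f k <= rsum n f.
Proof.
  induction n; intros H Hk; [lia|]. simpl.
  destruct (Nat.eq_dec k n) as [->|Hne].
  - assert (0 <= rsum n f) by (apply rsum_nonneg; auto). lra.
  - assert (f k <= rsum n f) by (apply IHn; auto; lia).
    assert (0 <= f n) by auto. lra.
Qed.

Lemma fst_csum n f : fst (csum n f) = rsum n (fun k => fst (f k)).
Proof. induction n; simpl; auto. rewrite IHn; auto. Qed.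

Lemma snd_csum n f : snd (csum n f) = rsum n (fun k => snd (f k)).
Proof. induction n; simpl; auto. rewrite IHn; auto. Qed.

Lemma csum_ext n f g : (forall k, (k < n)%nat -> f k = g k) -> csum n f = csum n g.
Proof. induction n; intros H; simpl; auto. rewrite IHn, H; auto. Qed.

Lemma csum_plus n f g : csum n (fun k => (f k + g k)%C) = (csum n f + csum n g)%C.
Proof. induction n; simpl; [cring | rewrite IHn; ring]. Qed.

Lemma csum_scal n c f : csum n (fun k => (c * f k)%C) = (c * csum n f)%C.
Proof. induction n; simpl; [cring | rewrite IHn; ring]. Qed.

Lemma csum_opp n f : csum n (fun k => (- f k)%C) = (- csum n f)%C.
Proof. induction n; simpl; [cring | rewrite IHn; ring]. Qed.

Lemma csum_zero n : csum n (fun _ => RtoC 0) = RtoC 0.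
Proof. induction n; simpl; [auto | rewrite IHn; ring]. Qed.

Lemma csum_conj n f : Cconj (csum n f) = csum n (fun k => Cconj (f k)).
Proof. induction n; simpl; [cring | rewrite Cplus_conj, IHn; auto]. Qed.

Lemma csum_swap n m (f : nat -> nat -> C) :
  csum n (fun i => csum m (fun j => f i j)) = csum m (fun j => csum n (fun i => f i j)).
Proof.
  induction n; simpl; [symmetry; apply csum_zero|].
  rewrite IHn, <- csum_plus. reflexivity.
Qed.

Lemma cinner_ext d u u' v v' : (forall a, (a < d)%nat -> u a = u' a) ->
  (forall a, (a < d)%nat -> v a = v' a) -> cinner d u v = cinner d u' v'.
Proof. intros Hu Hv. apply csum_ext. intros a Ha. rewrite Hu, Hv; auto. Qed.

Lemma cinner_conj d u v : cinner d v u = Cconj (cinner d u v).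
Proof. unfold cinner. rewrite csum_conj. apply csum_ext. intros; cring. Qed.

Lemma cinner_scal_r d u c v : cinner d u (fun a => (c * v a)%C) = (c * cinner d u v)%C.
Proof. unfold cinner. rewrite <- csum_scal. apply csum_ext. intros; ring. Qed.

Lemma cinner_scalR_l d r u v :
  cinner d (fun a => (RtoC r * u a)%C) v = (RtoC r * cinner d u v)%C.
Proof. unfold cinner. rewrite <- csum_scal. apply csum_ext. intros; cring. Qed.

Lemma cinner_csum_r d N u (v : nat -> cvec) :
  cinner d u (fun a => csum N (fun k => v k a)) = csum N (fun k => cinner d u (v k)).
Proof.
  unfold cinner. rewrite <- csum_swap. apply csum_ext. intros.
  rewrite <- csum_scal. reflexivity.
Qed.

Lemma matvec_csum d A N (v : nat -> cvec) a :
  matvec d A (fun b => csum N (fun k => v k b)) a = csum N (fun k => matvec d A (v k) a).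
Proof.
  unfold matvec. rewrite <- csum_swap. apply csum_ext. intros.
  rewrite <- csum_scal. reflexivity.
Qed.

Lemma fst_cinner_self d u :
  fst (cinner d u u) = rsum d (fun a => fst (u a) * fst (u a) + snd (u a) * snd (u a)).
Proof. unfold cinner. rewrite fst_csum. apply rsum_ext. intros. simpl. ring. Qed.

Lemma cinner_self_real d u : cinner d u u = RtoC (fst (cinner d u u)).
Proof.
  apply injective_projections; simpl; auto.
  unfold cinner. rewrite snd_csum, <- (Rmult_0_r (INR d)), <- rsum_const.
  apply rsum_ext. intros. simpl. ring.
Qed.

Lemma cinner_self_nonneg d u : 0 <= fst (cinner d u u).
Proof. rewrite fst_cinner_self. apply rsum_nonneg. intros. nra. Qed.

Lemma cinner_null d u v : fst (cinner d u u) = 0 -> cinner d u v = RtoC 0.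
Proof.
  intros H. rewrite fst_cinner_self in H.
  assert (Hz : forall a, (a < d)%nat -> fst (u a) = 0 /\ snd (u a) = 0).
  { intros a Ha.
    assert (T := rsum_term d (fun a => fst (u a) * fst (u a) + snd (u a) * snd (u a)) a
                  (fun i _ => ltac:(nra)) Ha). simpl in T. split; nra. }
  unfold cinner. rewrite <- (csum_zero d). apply csum_ext. intros a Ha.
  destruct (Hz a Ha) as [H1 H2]. apply injective_projections; simpl; rewrite H1, H2; ring.
Qed.

(* Cauchy-Schwarz: |<u,v>|^2 <= |u|^2 |v|^2, obtained from |A v - <u,v> u|^2 >= 0
   with A = |u|^2. *)
Lemma cinner_cauchy_schwarz d u v :
  fst (cinner d u v) * fst (cinner d u v) + snd (cinner d u v) * snd (cinner d u v)
  <= fst (cinner d u u) * fst (cinner d v v).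
Proof.
  set (B := cinner d u v). set (A := fst (cinner d u u)). set (V := fst (cinner d v v)).
  assert (HA : 0 <= A) by apply cinner_self_nonneg.
  assert (HV : 0 <= V) by apply cinner_self_nonneg.
  destruct (Req_dec A 0) as [H0|H0].
  { unfold B. rewrite cinner_null by exact H0. simpl. nra. }
  set (w := fun a => (RtoC A * v a - B * u a)%C).
  assert (Hw : cinner d w w = (RtoC (A * A) * cinner d v v + (- RtoC A * B) * cinner d v u
             + (- RtoC A * Cconj B) * cinner d u v + (B * Cconj B) * cinner d u u)%C).
  { unfold cinner. rewrite <- !csum_scal, <- !csum_plus.
    apply csum_ext. intros a Ha. unfold w. cring. }
  assert (Hn := cinner_self_nonneg d w). rewrite Hw in Hn.
  rewrite (cinner_conj d u v), (cinner_self_real d v), (cinner_self_real d u) in Hn.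
  fold B A V in Hn. simpl in Hn.
  assert (A * (A * V - (fst B * fst B + snd B * snd B)) >= 0) by nra.
  nra.
Qed.

Lemma cinner_sub_self d x y :
  fst (cinner d (fun a => (x a - y a)%C) (fun a => (x a - y a)%C))
  = fst (cinner d x x) - 2 * fst (cinner d y x) + fst (cinner d y y).
Proof.
  unfold cinner. rewrite !fst_csum.
  replace (rsum d (fun k => fst (Cconj (x k) * x k)%C)
           - 2 * rsum d (fun k => fst (Cconj (y k) * x k)%C)
           + rsum d (fun k => fst (Cconj (y k) * y k)%C))
    with (1 * rsum d (fun k => 1 * fst (Cconj (x k) * x k)%C
                              + (-2) * fst (Cconj (y k) * x k)%C)
          + 1 * rsum d (fun k => fst (Cconj (y k) * y k)%C))
    by (rewrite rsum_lin; ring).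
  rewrite <- rsum_lin. apply rsum_ext. intros. simpl. ring.
Qed.

Lemma dist_sq_triangle d x y w :
  fst (cinner d (fun a => (x a - y a)%C) (fun a => (x a - y a)%C))
  <= 2 * fst (cinner d (fun a => (x a - w a)%C) (fun a => (x a - w a)%C))
   + 2 * fst (cinner d (fun a => (y a - w a)%C) (fun a => (y a - w a)%C)).
Proof.
  rewrite !fst_cinner_self, <- rsum_lin. apply rsum_le. intros. simpl.
  generalize (fst (x k)) (snd (x k)) (fst (y k)) (snd (y k)) (fst (w k)) (snd (w k)).
  intros a1 a2 b1 b2 c1 c2.
  assert (0 <= (a1 + b1 - 2 * c1) * (a1 + b1 - 2 * c1)) by apply Rle_0_sqr.
  assert (0 <= (a2 + b2 - 2 * c2) * (a2 + b2 - 2 * c2)) by apply Rle_0_sqr. nra.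
Qed.

Lemma skew_hermitian_form_imaginary d A u :
  skew_hermitian d A -> fst (cinner d u (matvec d A u)) = 0.
Proof.
  intros Hs.
  set (F := fun a b => (Cconj (u a) * (A a b * u b))%C).
  assert (E1 : cinner d u (matvec d A u) = csum d (fun a => csum d (fun b => F a b))).
  { unfold cinner, matvec. apply csum_ext. intros. rewrite <- csum_scal. reflexivity. }
  assert (E2 : Cconj (cinner d u (matvec d A u)) = (- cinner d u (matvec d A u))%C).
  { rewrite E1. transitivity (csum d (fun a => csum d (fun b => (- F b a)%C))).
    - rewrite csum_conj. apply csum_ext; intros a Ha.
      rewrite csum_conj. apply csum_ext; intros b Hb.
      unfold F. rewrite (Hs a b); auto. cring.
    - rewrite (csum_ext d _ (fun a => (- csum d (fun b => F b a))%C))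
        by (intros; apply csum_opp).
      rewrite csum_opp, csum_swap. reflexivity. }
  assert (H := f_equal fst E2). simpl in H. lra.
Qed.

Lemma D_mult (f g : R -> R) x df dg : is_derive f x df -> is_derive g x dg ->
  is_derive (fun t => f t * g t) x (df * g x + f x * dg).
Proof. intros. apply (is_derive_mult (K:=R_AbsRing)); auto. intros; apply Rmult_comm. Qed.

Lemma D_plus (f g : R -> R) x df dg : is_derive f x df -> is_derive g x dg ->
  is_derive (fun t => f t + g t) x (df + dg).
Proof. intros. apply (is_derive_plus (K:=R_AbsRing) (V:=R_NormedModule)); auto. Qed.

Lemma D_minus (f g : R -> R) x df dg : is_derive f x df -> is_derive g x dg ->
  is_derive (fun t => f t - g t) x (df - dg).
Proof. intros. apply (is_derive_minus (K:=R_AbsRing) (V:=R_NormedModule)); auto. Qed.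

Lemma D_const (c x : R) : is_derive (fun _ => c) x 0.
Proof. apply (is_derive_const (K:=R_AbsRing) (V:=R_NormedModule)). Qed.

Lemma D_exp (lam t : R) : is_derive (fun s => exp (lam * s)) t (lam * exp (lam * t)).
Proof. auto_derive; [auto | ring]. Qed.

Definition cderive (f : R -> C) (t : R) (l : C) : Prop :=
  is_derive (fun s => fst (f s)) t (fst l) /\ is_derive (fun s => snd (f s)) t (snd l).

Lemma cderive_of_is_derive (f : R -> C) t l : is_derive f t l -> cderive f t l.
Proof.
  intros H. split; unfold is_derive in *.
  - exact (filterdiff_comp _ _ _ _ H
      (filterdiff_linear _ (is_linear_fst (U:=R_NormedModule) (V:=R_NormedModule)))).
  - exact (filterdiff_comp _ _ _ _ H
      (filterdiff_linear _ (is_linear_snd (U:=R_NormedModule) (V:=R_NormedModule)))).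
Qed.

Lemma cderive_eq f t l l' : cderive f t l -> l = l' -> cderive f t l'.
Proof. intros H E; subst; auto. Qed.

Lemma cderive_const (c : C) t : cderive (fun _ => c) t (RtoC 0).
Proof. split; apply D_const. Qed.

Lemma cderive_plus f g t df dg : cderive f t df -> cderive g t dg ->
  cderive (fun s => (f s + g s)%C) t (df + dg)%C.
Proof. intros [F1 F2] [G1 G2]; split; simpl; apply D_plus; assumption. Qed.

Lemma cderive_mult f g t df dg : cderive f t df -> cderive g t dg ->
  cderive (fun s => (f s * g s)%C) t (df * g t + f t * dg)%C.
Proof.
  intros [F1 F2] [G1 G2]; split; simpl.
  - match goal with |- is_derive _ _ ?l =>
      replace l with ((fst df * fst (g t) + fst (f t) * fst dg)
                      - (snd df * snd (g t) + snd (f t) * snd dg)) by ring end.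
    apply D_minus; apply D_mult; assumption.
  - match goal with |- is_derive _ _ ?l =>
      replace l with ((fst df * snd (g t) + fst (f t) * snd dg)
                      + (snd df * fst (g t) + snd (f t) * fst dg)) by ring end.
    apply D_plus; apply D_mult; assumption.
Qed.

Lemma cderive_conj f t df : cderive f t df -> cderive (fun s => Cconj (f s)) t (Cconj df).
Proof.
  intros [F1 F2]; split; simpl; [exact F1|].
  assert (E : is_derive (fun s => 0 - snd (f s)) t (0 - snd df))
    by (apply D_minus; [apply D_const | exact F2]).
  replace (- snd df) with (0 - snd df) by ring.
  revert E. apply is_derive_ext. intros; simpl; ring.
Qed.

Lemma cderive_csum n (F : R -> nat -> C) F' t :
  (forall k, (k < n)%nat -> cderive (fun s => F s k) t (F' k)) ->
  cderive (fun s => csum n (F s)) t (csum n F').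
Proof.
  induction n; intros H; simpl; [apply cderive_const|].
  apply cderive_plus; [apply IHn; intros; apply H; lia | apply H; lia].
Qed.

Lemma cderive_cinner d (u v : R -> cvec) u' v' t :
  (forall a, (a < d)%nat -> cderive (fun s => u s a) t (u' a)) ->
  (forall a, (a < d)%nat -> cderive (fun s => v s a) t (v' a)) ->
  cderive (fun s => cinner d (u s) (v s)) t (cinner d u' (v t) + cinner d (u t) v')%C.
Proof.
  intros Hu Hv. unfold cinner. eapply cderive_eq.
  - apply (cderive_csum d (fun s a => (Cconj (u s a) * v s a)%C)). intros k Hk.
    apply cderive_mult; [apply cderive_conj|]; auto.
  - rewrite <- csum_plus. reflexivity.
Qed.

Lemma derive_norm_sq d (u : R -> cvec) u' t :
  (forall a, (a < d)%nat -> cderive (fun s => u s a) t (u' a)) ->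
  is_derive (fun s => fst (cinner d (u s) (u s))) t (2 * fst (cinner d (u t) u')).
Proof.
  intros Hu. destruct (cderive_cinner d u u u' u' t Hu Hu) as [D _].
  eapply is_derive_ext; [intros; reflexivity|].
  replace (2 * _) with (fst (cinner d u' (u t) + cinner d (u t) u')%C); [exact D|].
  simpl. rewrite (cinner_conj d (u t) u'). simpl. ring.
Qed.

(* Right-continuity at 0: the solution is only differentiable for t > 0, and its
   values at t = 0 are reached through this limit. *)
Definition right_cont0 (f : R -> R) : Prop :=
  filterlim f (at_right 0) (locally (f 0)).

Lemma right_cont0_const c : right_cont0 (fun _ => c).
Proof. apply filterlim_const. Qed.

Lemma right_cont0_plus f g :
  right_cont0 f -> right_cont0 g -> right_cont0 (fun t => f t + g t).
Proof.
  intros Hf Hg. eapply filterlim_comp_2; [exact Hf | exact Hg |].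
  apply (filterlim_plus (V:=R_NormedModule)).
Qed.

Lemma right_cont0_mult f g :
  right_cont0 f -> right_cont0 g -> right_cont0 (fun t => f t * g t).
Proof.
  intros Hf Hg. eapply filterlim_comp_2; [exact Hf | exact Hg |].
  apply (filterlim_mult (K:=R_AbsRing)).
Qed.

Lemma right_cont0_minus f g :
  right_cont0 f -> right_cont0 g -> right_cont0 (fun t => f t - g t).
Proof.
  intros Hf Hg. unfold right_cont0.
  apply filterlim_ext with (f := fun t => f t + (-1) * g t); [intros; ring|].
  replace (f 0 - g 0) with (f 0 + (-1) * g 0) by ring.
  apply right_cont0_plus; [|apply right_cont0_mult]; auto using right_cont0_const.
Qed.

Lemma right_cont0_exp lam : right_cont0 (fun s => exp (lam * s)).
Proof.
  intros P [eps HP].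
  assert (Hc : continuous (fun s => exp (lam * s)) 0).
  { apply (ex_derive_continuous (K:=R_AbsRing) (V:=R_NormedModule)).
    exists (lam * exp (lam * 0)). apply D_exp. }
  destruct (Hc _ (locally_ball _ eps)) as [del Hdel].
  exists del. intros y Hy _. apply HP, Hdel, Hy.
Qed.

Definition cright_cont0 (f : R -> C) : Prop :=
  right_cont0 (fun t => fst (f t)) /\ right_cont0 (fun t => snd (f t)).

Lemma cright_cont0_of_filterlim (f : R -> C) :
  filterlim f (at_right 0) (locally (f 0)) -> cright_cont0 f.
Proof.
  intros H. split; intros P [eps HP].
  - apply (H (fun y : C => P (fst y))). exists eps. intros y [Hy _]. apply HP, Hy.
  - apply (H (fun y : C => P (snd y))). exists eps. intros y [_ Hy]. apply HP, Hy.
Qed.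

Lemma cright_cont0_const c : cright_cont0 (fun _ => c).
Proof. split; apply right_cont0_const. Qed.

Lemma cright_cont0_plus f g :
  cright_cont0 f -> cright_cont0 g -> cright_cont0 (fun s => (f s + g s)%C).
Proof. intros [F1 F2] [G1 G2]; split; simpl; apply right_cont0_plus; auto. Qed.

Lemma cright_cont0_mult f g :
  cright_cont0 f -> cright_cont0 g -> cright_cont0 (fun s => (f s * g s)%C).
Proof.
  intros [F1 F2] [G1 G2]; split; simpl.
  - apply right_cont0_minus; apply right_cont0_mult; auto.
  - apply right_cont0_plus; apply right_cont0_mult; auto.
Qed.

Lemma cright_cont0_conj f : cright_cont0 f -> cright_cont0 (fun s => Cconj (f s)).
Proof.
  intros [F1 F2]; split; simpl; auto.
  assert (H : right_cont0 (fun t => 0 - snd (f t)))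
    by (apply right_cont0_minus; auto using right_cont0_const).
  unfold right_cont0 in *. replace (- snd (f 0)) with (0 - snd (f 0)) by ring.
  revert H. apply filterlim_ext. intros; ring.
Qed.

Lemma cright_cont0_csum n (F : R -> nat -> C) :
  (forall k, (k < n)%nat -> cright_cont0 (fun s => F s k)) ->
  cright_cont0 (fun s => csum n (F s)).
Proof.
  induction n; intros H; simpl; [apply cright_cont0_const|].
  apply cright_cont0_plus; auto.
Qed.

Lemma cright_cont0_cinner d (u v : R -> cvec) :
  (forall a, (a < d)%nat -> cright_cont0 (fun s => u s a)) ->
  (forall a, (a < d)%nat -> cright_cont0 (fun s => v s a)) ->
  cright_cont0 (fun s => cinner d (u s) (v s)).
Proof.
  intros Hu Hv. apply (cright_cont0_csum d (fun s a => (Cconj (u s a) * v s a)%C)).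
  intros. apply cright_cont0_mult; [apply cright_cont0_conj|]; auto.
Qed.

(* Monotonicity on [0, +oo) from a sign condition on the derivative on (0, +oo):
   the mean value theorem handles 0 < s < t, right-continuity handles s = 0. *)
Lemma nonincreasing_from_0 (f df : R -> R) :
  right_cont0 f -> (forall t, 0 < t -> is_derive f t (df t)) ->
  (forall t, 0 < t -> df t <= 0) -> forall t, 0 <= t -> f t <= f 0.
Proof.
  intros Hrc Hd Hneg t Ht. destruct (Req_dec t 0) as [->|E]; [lra|].
  assert (Hmvt : forall s, 0 < s < t -> f t <= f s).
  { intros s Hs.
    destruct (MVT_gen f s t df) as [c [Hc Hm]].
    - intros x Hx. apply Hd. rewrite Rmin_left in Hx by lra. lra.
    - intros x Hx. rewrite Rmin_left in Hx by lra. rewrite Rmax_right in Hx by lra.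
      apply continuity_pt_filterlim.
      apply (ex_derive_continuous (K:=R_AbsRing) (V:=R_NormedModule)).
      exists (df x). apply Hd. lra.
    - rewrite Rmin_left, Rmax_right in Hc by lra.
      assert (df c <= 0) by (apply Hneg; lra). nra. }
  destruct (Rle_dec (f t) (f 0)) as [L|L]; auto. exfalso.
  assert (Heps : 0 < f t - f 0) by lra.
  destruct (Hrc (fun y => Rabs (y - f 0) < f t - f 0)) as [del Hdel].
  { exists (mkposreal _ Heps). intros y Hy. exact Hy. }
  set (y := Rmin (del / 2) (t / 2)).
  assert (Hy0 : 0 < y) by (apply Rmin_pos; [destruct del; simpl; lra | lra]).
  assert (Hy1 : y <= del / 2) by apply Rmin_l.
  assert (Hy2 : y <= t / 2) by apply Rmin_r.
  assert (Hb : Rabs (f y - f 0) < f t - f 0).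
  { apply Hdel; auto. unfold ball; simpl. unfold AbsRing_ball, abs, minus, plus, opp; simpl.
    rewrite Rabs_right by lra. destruct del; simpl in *; lra. }
  assert (f t <= f y) by (apply Hmvt; lra).
  apply Rabs_def2 in Hb. lra.
Qed.

Lemma nondecreasing_from_0 (f df : R -> R) :
  right_cont0 f -> (forall t, 0 < t -> is_derive f t (df t)) ->
  (forall t, 0 < t -> 0 <= df t) -> forall t, 0 <= t -> f 0 <= f t.
Proof.
  intros Hrc Hd Hpos t Ht.
  assert (0 - f t <= 0 - f 0); [|lra].
  apply (nonincreasing_from_0 (fun t => 0 - f t) (fun t => 0 - df t)); auto.
  - apply right_cont0_minus; auto using right_cont0_const.
  - intros; apply D_minus; auto using D_const.
  - intros s Hs. specialize (Hpos s Hs). lra.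
Qed.

Lemma constant_from_0 (f : R -> R) :
  right_cont0 f -> (forall t, 0 < t -> is_derive f t 0) -> forall t, 0 <= t -> f t = f 0.
Proof.
  intros Hrc Hd t Ht. apply Rle_antisym.
  - apply (nonincreasing_from_0 f (fun _ => 0)); auto; intros; lra.
  - apply (nondecreasing_from_0 f (fun _ => 0)); auto; intros; lra.
Qed.

(* Gronwall: u' <= - lam u on (0, +oo) gives u t <= u 0 exp (- lam t), since
   u(t) exp (lam t) is nonincreasing. *)
Lemma gronwall_decay (u du : R -> R) (lam : R) :
  right_cont0 u -> (forall t, 0 < t -> is_derive u t (du t)) ->
  (forall t, 0 < t -> du t <= - lam * u t) ->
  forall t, 0 <= t -> u t <= u 0 * exp (- lam * t).
Proof.
  intros Hrc Hd Hineq t Ht.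
  assert (Hh : u t * exp (lam * t) <= u 0 * exp (lam * 0)).
  { apply (nonincreasing_from_0 (fun s => u s * exp (lam * s))
             (fun s => du s * exp (lam * s) + u s * (lam * exp (lam * s)))); auto.
    - apply right_cont0_mult; auto using right_cont0_exp.
    - intros s Hs. apply (D_mult u (fun s => exp (lam * s))); auto using D_exp.
    - intros s Hs. specialize (Hineq s Hs).
      assert (0 < exp (lam * s)) by apply exp_pos. nra. }
  rewrite Rmult_0_r, exp_0, Rmult_1_r in Hh.
  assert (E : exp (lam * t) * exp (- lam * t) = 1).
  { rewrite <- exp_plus. replace (lam * t + - lam * t) with 0 by ring. apply exp_0. }
  assert (0 < exp (- lam * t)) by apply exp_pos.
  replace (u t) with (u t * exp (lam * t) * exp (- lam * t)) by (rewrite Rmult_assoc, E; ring).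
  apply Rmult_le_compat_r; lra.
Qed.

Definition centroid_sq (d N : nat) (x : nat -> cvec) : R :=
  fst (cinner d (centroid N x) (centroid N x)).

(* Contribution of particle k to Re <x_c, x_c'>, with g = |x_c|^2 and
   p + i q = <x_c, x_k>. *)
Definition sync_rate_term (k0 k1 g p q : R) : R :=
  k0 * (g - (p * p - q * q)) + 2 * k1 * (q * q).

Lemma cinner_lohe_rhs d N A k0 k1 (x : nat -> cvec) j u :
  cinner d u (lohe_rhs d N A k0 k1 x j) =
  (cinner d u (matvec d A (x j))
   + RtoC k0 * cinner d u (centroid N x) * cinner d (x j) (x j)
   - RtoC k0 * cinner d (centroid N x) (x j) * cinner d u (x j)
   + RtoC k1 * (cinner d (x j) (centroid N x) - cinner d (centroid N x) (x j))
       * cinner d u (x j))%C.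
Proof.
  unfold cinner at 1.
  transitivity (csum d (fun a =>
     (Cconj (u a) * matvec d A (x j) a
      + (RtoC k0 * cinner d (x j) (x j)) * (Cconj (u a) * centroid N x a)
      + (- RtoC k0 * cinner d (centroid N x) (x j)) * (Cconj (u a) * x j a)
      + (RtoC k1 * (cinner d (x j) (centroid N x) - cinner d (centroid N x) (x j)))
          * (Cconj (u a) * x j a))%C)).
  { apply csum_ext. intros a Ha. unfold lohe_rhs. cbv zeta beta. ring. }
  rewrite !csum_plus, !csum_scal. unfold cinner. ring.
Qed.

Lemma lohe_rhs_tangent d N A k0 k1 (x : nat -> cvec) j : skew_hermitian d A ->
  fst (cinner d (x j) (lohe_rhs d N A k0 k1 x j)) = 0.
Proof.
  intros Hs. rewrite cinner_lohe_rhs.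
  rewrite (cinner_conj d (centroid N x) (x j)), (cinner_self_real d (x j)).
  generalize (skew_hermitian_form_imaginary d A (x j) Hs).
  generalize (cinner d (x j) (matvec d A (x j))) (cinner d (centroid N x) (x j))
             (fst (cinner d (x j) (x j))).
  intros [T1 T2] [b1 b2] r HT. simpl in HT. simpl. rewrite HT. ring.
Qed.

Lemma sum_inner_centroid d N (x : nat -> cvec) : (1 <= N)%nat ->
  csum N (fun k => cinner d (centroid N x) (x k))
  = (RtoC (INR N) * cinner d (centroid N x) (centroid N x))%C.
Proof.
  intros HN. assert (HN0 : INR N <> 0) by (apply not_0_INR; lia).
  rewrite <- cinner_csum_r, <- cinner_scal_r. apply cinner_ext; intros; auto.
  unfold centroid. apply injective_projections; simpl; field; auto.
Qed.

Lemma sum_re_inner_centroid d N (x : nat -> cvec) : (1 <= N)%nat ->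
  rsum N (fun k => fst (cinner d (centroid N x) (x k))) = INR N * centroid_sq d N x.
Proof.
  intros HN. rewrite <- fst_csum, sum_inner_centroid by exact HN. simpl.
  unfold centroid_sq. ring.
Qed.

(* The rotation terms contribute N^-1 Re <x_c, A (sum_k x_k)> = N Re <x_c, A x_c> = 0. *)
Lemma centroid_rotation_term d N A (x : nat -> cvec) : skew_hermitian d A ->
  fst (csum N (fun k => cinner d (centroid N x) (matvec d A (x k)))) = 0.
Proof.
  intros Hs. rewrite <- cinner_csum_r.
  rewrite (cinner_ext d _ (fun a => RtoC (/ INR N) * csum N (fun k => x k a))%C _
     (matvec d A (fun b => csum N (fun k => x k b)))).
  - rewrite cinner_scalR_l. simpl. rewrite skew_hermitian_form_imaginary by auto.
    simpl. ring.
  - intros; reflexivity.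
  - intros; symmetry; apply matvec_csum.
Qed.

Lemma centroid_velocity_inner d N A k0 k1 (x : nat -> cvec) : skew_hermitian d A ->
  (forall k, (k < N)%nat -> fst (cinner d (x k) (x k)) = 1) ->
  fst (cinner d (centroid N x) (centroid N (fun k => lohe_rhs d N A k0 k1 x k)))
  = / INR N * rsum N (fun k => sync_rate_term k0 k1 (centroid_sq d N x)
       (fst (cinner d (centroid N x) (x k))) (snd (cinner d (centroid N x) (x k)))).
Proof.
  intros Hs Hn.
  change (centroid N (fun k => lohe_rhs d N A k0 k1 x k)) with
    (fun a => RtoC (/ INR N) * csum N (fun k => lohe_rhs d N A k0 k1 x k a))%C.
  rewrite cinner_scal_r, cinner_csum_r. simpl fst. rewrite Rmult_0_l, Rminus_0_r.
  f_equal.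
  rewrite (csum_ext N _ (fun k => (cinner d (centroid N x) (matvec d A (x k))
     + (RtoC k0 * cinner d (centroid N x) (centroid N x) * cinner d (x k) (x k)
        - RtoC k0 * cinner d (centroid N x) (x k) * cinner d (centroid N x) (x k)
        + RtoC k1 * (cinner d (x k) (centroid N x) - cinner d (centroid N x) (x k))
            * cinner d (centroid N x) (x k)))%C))
    by (intros k Hk; rewrite cinner_lohe_rhs; ring).
  rewrite csum_plus. simpl fst. rewrite centroid_rotation_term, Rplus_0_l, fst_csum by auto.
  apply rsum_ext. intros k Hk.
  rewrite (cinner_conj d (centroid N x) (x k)), (cinner_self_real d (x k)), (Hn k Hk).
  unfold centroid_sq, sync_rate_term. rewrite (cinner_self_real d (centroid N x)).
  generalize (cinner d (centroid N x) (x k)) (fst (cinner d (centroid N x) (centroid N x))).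
  intros [b1 b2] g. simpl. ring.
Qed.

Definition order_growth (N : nat) (k0 k1 g : R) (p q : nat -> R) : R :=
  2 / INR N * rsum N (fun k => sync_rate_term k0 k1 g (p k) (q k)).

Lemma order_growth_nonneg N k0 k1 g (p q : nat -> R) : (1 <= N)%nat -> 0 <= k0 -> 0 <= k1 ->
  (forall k, (k < N)%nat -> p k * p k + q k * q k <= g) -> 0 <= order_growth N k0 k1 g p q.
Proof.
  intros HN Hk0 Hk1 Hb. assert (0 < INR N) by (apply lt_0_INR; lia).
  apply Rmult_le_pos; [unfold Rdiv; apply Rmult_le_pos; [lra | left; apply Rinv_0_lt_compat; lra]|].
  apply rsum_nonneg. intros k Hk. specialize (Hb k Hk). unfold sync_rate_term.
  assert (0 <= q k * q k) by nra. nra.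
Qed.

(* Proof: with s_k = rho - p_k >= 0 and S = sum_k s_k = N rho (1 - rho) >= s_k,
   rho^2 - p_k^2 = s_k (2 rho - s_k) >= s_k (2 rho - S). *)
Lemma gap_sum_lower N (p : nat -> R) rho : 0 <= rho ->
  (forall k, (k < N)%nat -> p k * p k <= rho * rho) -> rsum N p = INR N * (rho * rho) ->
  INR N * (rho * rho) * (1 - rho) * (2 - INR N * (1 - rho))
  <= rsum N (fun k => rho * rho - p k * p k).
Proof.
  intros Hrho Hb Hsum. set (S := INR N * rho * (1 - rho)).
  assert (Hs : rsum N (fun k => rho - p k) = S).
  { rewrite (rsum_ext N _ (fun k => rho * 1 + (-1) * p k)) by (intros; ring).
    rewrite rsum_lin, rsum_const, Hsum. unfold S. ring. }
  assert (Hnn : forall k, (k < N)%nat -> 0 <= rho - p k).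
  { intros k Hk. specialize (Hb k Hk). nra. }
  assert (Hle : forall k, (k < N)%nat -> rho - p k <= S).
  { intros k Hk. rewrite <- Hs. apply (rsum_term N (fun k => rho - p k)); auto. }
  assert (Hterm : forall k, (k < N)%nat -> (2 * rho - S) * (rho - p k) <= rho * rho - p k * p k).
  { intros k Hk. specialize (Hnn k Hk). specialize (Hle k Hk). nra. }
  apply rsum_le in Hterm. rewrite rsum_scal, Hs in Hterm.
  unfold S in Hterm. nra.
Qed.

(* Comparison of the rates at the initial and the current order parameter:
   r0^2 del0 (1 - rho^2) <= 2 rho^2 (1 - rho) del, using 1 - rho^2 <= 2 (1 - rho). *)
Lemma deficit_comparison r0 rho del0 del : 0 < r0 -> r0 <= rho -> rho <= 1 ->
  0 < del0 -> del0 <= del ->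
  r0 * r0 * del0 * (1 - rho * rho) <= 2 * (rho * rho * (1 - rho) * del).
Proof.
  intros Hr0 Hrho Hrho1 Hd0 Hd.
  assert (H1 : r0 * r0 * del0 <= rho * rho * del)
    by (apply Rmult_le_compat; [nra | lra | nra | lra]).
  replace (2 * (rho * rho * (1 - rho) * del)) with (rho * rho * del * (2 * (1 - rho))) by ring.
  apply Rmult_le_compat; [nra | nra | exact H1 | nra].
Qed.

Lemma order_growth_lower N k0 k1 g r0 (p q : nat -> R) : (1 <= N)%nat ->
  0 < k0 -> 0 <= k1 -> 0 < r0 -> INR N * (1 - r0) < 2 -> r0 * r0 <= g ->
  (forall k, (k < N)%nat -> p k * p k + q k * q k <= g) -> rsum N p = INR N * g ->
  k0 * (r0 * r0) * (2 - INR N * (1 - r0)) * (1 - g) <= order_growth N k0 k1 g p q.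
Proof.
  intros HN Hk0 Hk1 Hr0 Hdel Hg Hb Hsum.
  assert (HNp : 0 < INR N) by (apply lt_0_INR; lia).
  set (rho := sqrt g).
  assert (Hrr : rho * rho = g) by (apply sqrt_sqrt; nra).
  assert (Hrho : r0 <= rho).
  { destruct (Rle_dec r0 rho); auto. assert (0 <= rho) by apply sqrt_pos. nra. }
  assert (Hp : forall k, (k < N)%nat -> p k * p k <= rho * rho).
  { intros k Hk. specialize (Hb k Hk). assert (0 <= q k * q k) by nra. nra. }
  assert (Hrho1 : rho <= 1).
  { assert (Hup : rsum N p <= rsum N (fun _ => rho)).
    { apply rsum_le. intros k Hk. specialize (Hp k Hk). nra. }
    rewrite rsum_const, Hsum, <- Hrr in Hup.
    assert (rho * rho <= rho) by (apply Rmult_le_reg_l with (INR N); lra). nra. }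
  assert (Hgap := gap_sum_lower N p rho ltac:(lra) Hp ltac:(rewrite Hrr; exact Hsum)).
  assert (Hterms : k0 * rsum N (fun k => rho * rho - p k * p k)
                   <= rsum N (fun k => sync_rate_term k0 k1 g (p k) (q k))).
  { rewrite <- rsum_scal. apply rsum_le. intros k Hk. unfold sync_rate_term.
    rewrite Hrr. assert (0 <= q k * q k) by nra. nra. }
  unfold order_growth. rewrite <- Hrr.
  set (del0 := 2 - INR N * (1 - r0)). set (del := 2 - INR N * (1 - rho)).
  assert (Hcompare : k0 * (r0 * r0) * del0 * (1 - rho * rho)
               <= 2 / INR N * (k0 * (INR N * (rho * rho) * (1 - rho) * del))).
  { replace (2 / INR N * (k0 * (INR N * (rho * rho) * (1 - rho) * del)))
      with (k0 * (2 * (rho * rho * (1 - rho) * del))) by (field; lra).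
    replace (k0 * (r0 * r0) * del0 * (1 - rho * rho))
      with (k0 * (r0 * r0 * del0 * (1 - rho * rho))) by ring.
    apply Rmult_le_compat_l; [lra|].
    apply deficit_comparison; unfold del0, del; nra. }
  assert (Hgrowth : 2 / INR N * (k0 * (INR N * (rho * rho) * (1 - rho) * del))
               <= 2 / INR N * rsum N (fun k => sync_rate_term k0 k1 g (p k) (q k))).
  { apply Rmult_le_compat_l; [unfold Rdiv; apply Rmult_le_pos; [lra|];
      left; apply Rinv_0_lt_compat; lra|].
    eapply Rle_trans; [|exact Hterms]. apply Rmult_le_compat_l; [lra | exact Hgap]. }
  rewrite <- Hrr in Hgrowth. lra.
Qed.

Definition unit_config (d N : nat) (x : nat -> cvec) : Prop :=
  forall k, (k < N)%nat -> fst (cinner d (x k) (x k)) = 1.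

Section UnitConfiguration.
Variables (d N : nat) (x : nat -> cvec).
Hypothesis HN : (1 <= N)%nat.
Hypothesis Hunit : unit_config d N x.

Lemma inner_centroid_bound k : (k < N)%nat ->
  fst (cinner d (centroid N x) (x k)) * fst (cinner d (centroid N x) (x k))
  + snd (cinner d (centroid N x) (x k)) * snd (cinner d (centroid N x) (x k))
  <= centroid_sq d N x.
Proof.
  intros Hk. eapply Rle_trans; [apply cinner_cauchy_schwarz|].
  rewrite (Hunit k Hk). unfold centroid_sq. lra.
Qed.

(* Since sum_k |x_k - x_c|^2 = N (1 - |x_c|^2), each particle is that close to x_c. *)
Lemma dist_sq_to_centroid k : (k < N)%nat ->
  fst (cinner d (fun a => (x k a - centroid N x a)%C) (fun a => (x k a - centroid N x a)%C))
  <= INR N * (1 - centroid_sq d N x).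
Proof.
  intros Hk.
  set (D := fun k => fst (cinner d (fun a => (x k a - centroid N x a)%C)
                                   (fun a => (x k a - centroid N x a)%C))).
  assert (HD : rsum N D = INR N * (1 - centroid_sq d N x)).
  { rewrite (rsum_ext N D (fun k => 1 * (1 + centroid_sq d N x)
                                   + (-2) * fst (cinner d (centroid N x) (x k)))).
    - rewrite rsum_lin, rsum_const, (sum_re_inner_centroid d N x HN). ring.
    - intros j Hj. unfold D. rewrite cinner_sub_self, (Hunit j Hj). unfold centroid_sq. ring. }
  change (D k <= INR N * (1 - centroid_sq d N x)). rewrite <- HD.
  apply rsum_term; auto. intros; apply cinner_self_nonneg.
Qed.

Lemma pairwise_dist_sq_bound i j : (i < N)%nat -> (j < N)%nat ->
  fst (cinner d (fun a => (x i a - x j a)%C) (fun a => (x i a - x j a)%C))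
  <= 4 * INR N * (1 - centroid_sq d N x).
Proof.
  intros Hi Hj. eapply Rle_trans; [apply (dist_sq_triangle d (x i) (x j) (centroid N x))|].
  assert (Di := dist_sq_to_centroid i Hi). assert (Dj := dist_sq_to_centroid j Hj). lra.
Qed.

End UnitConfiguration.

(* For unit vectors, |<u, v> - 1|^2 = |<u,v>|^2 - 2 Re <u,v> + 1 <= 2 - 2 Re <u,v> = |u - v|^2. *)
Lemma inner_defect_le_dist d u v :
  fst (cinner d u u) = 1 -> fst (cinner d v v) = 1 ->
  Cmod (Cminus (cinner d u v) (RtoC 1)) <= cnorm d (fun a => Cminus (u a) (v a)).
Proof.
  intros Hu Hv. unfold Cmod, cnorm. apply sqrt_le_1_alt.
  assert (Hcs := cinner_cauchy_schwarz d u v). rewrite Hu, Hv in Hcs.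
  rewrite cinner_sub_self, Hu, Hv, (cinner_conj d u v).
  generalize (cinner d u v) Hcs. intros [c1 c2] Hc. simpl in *. nra.
Qed.

Lemma sync_estimates d N (x : nat -> cvec) eps : (1 <= N)%nat -> unit_config d N x ->
  0 <= eps -> 1 - centroid_sq d N x <= eps * eps ->
  forall i j, (i < N)%nat -> (j < N)%nat ->
    Cmod (Cminus (cinner d (x i) (x j)) (RtoC 1)) <= 2 * sqrt (INR N) * eps /\
    cnorm d (fun a => Cminus (x i a) (x j a)) <= 2 * sqrt (INR N) * eps.
Proof.
  intros HN Hunit Heps Hdef i j Hi Hj.
  assert (HNp : 0 < INR N) by (apply lt_0_INR; lia).
  assert (Hdist : cnorm d (fun a => Cminus (x i a) (x j a)) <= 2 * sqrt (INR N) * eps).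
  { unfold cnorm. rewrite <- (sqrt_square (2 * sqrt (INR N) * eps))
      by (assert (0 <= sqrt (INR N)) by apply sqrt_pos; nra).
    apply sqrt_le_1_alt. eapply Rle_trans; [apply (pairwise_dist_sq_bound d N x); auto|].
    replace (2 * sqrt (INR N) * eps * (2 * sqrt (INR N) * eps))
      with (4 * (sqrt (INR N) * sqrt (INR N)) * (eps * eps)) by ring.
    rewrite sqrt_sqrt by lra. nra. }
  split; [|exact Hdist].
  eapply Rle_trans; [apply inner_defect_le_dist; auto | exact Hdist].
Qed.

Section LoheSolution.
Variables (d N : nat) (Omega : nat -> nat -> C) (k0 k1 : R) (z : R -> nat -> cvec).
Hypothesis HN : (1 <= N)%nat.
Hypothesis Hskew : skew_hermitian d Omega.
Hypothesis Hcont : forall j a, (j < N)%nat -> (a < d)%nat ->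
  filterlim (fun t => z t j a) (at_right 0) (locally (z 0 j a)).
Hypothesis Hder : forall t j a, 0 < t -> (j < N)%nat -> (a < d)%nat ->
  is_derive (fun s => z s j a) t (lohe_rhs d N Omega k0 k1 (z t) j a).
Hypothesis Hunit0 : unit_config d N (z 0).

Lemma particle_cderive t j a : 0 < t -> (j < N)%nat -> (a < d)%nat ->
  cderive (fun s => z s j a) t (lohe_rhs d N Omega k0 k1 (z t) j a).
Proof. intros; apply cderive_of_is_derive, Hder; auto. Qed.

Lemma centroid_cderive t a : 0 < t -> (a < d)%nat ->
  cderive (fun s => centroid N (z s) a) t
          (centroid N (fun k => lohe_rhs d N Omega k0 k1 (z t) k) a).
Proof.
  intros Ht Ha. unfold centroid. eapply cderive_eq.
  - apply cderive_mult; [apply cderive_const|].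
    apply (cderive_csum N (fun s k => z s k a)). intros; apply particle_cderive; auto.
  - cbv beta. ring.
Qed.

Lemma particle_right_cont j a : (j < N)%nat -> (a < d)%nat ->
  cright_cont0 (fun s => z s j a).
Proof. intros; apply cright_cont0_of_filterlim, Hcont; auto. Qed.

Lemma centroid_right_cont a : (a < d)%nat -> cright_cont0 (fun s => centroid N (z s) a).
Proof.
  intros Ha. unfold centroid. apply cright_cont0_mult; [apply cright_cont0_const|].
  apply (cright_cont0_csum N (fun s k => z s k a)). intros; apply particle_right_cont; auto.
Qed.

Lemma unit_preserved t : 0 <= t -> unit_config d N (z t).
Proof.
  intros Ht j Hj. rewrite <- (Hunit0 j Hj).
  apply (constant_from_0 (fun s => fst (cinner d (z s j) (z s j)))); auto.
  - apply (cright_cont0_cinner d (fun s => z s j) (fun s => z s j));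
      intros; apply particle_right_cont; auto.
  - intros s Hs.
    replace 0 with (2 * fst (cinner d (z s j) (lohe_rhs d N Omega k0 k1 (z s) j)))
      by (rewrite lohe_rhs_tangent by exact Hskew; ring).
    apply derive_norm_sq. intros; apply particle_cderive; auto.
Qed.

Lemma centroid_sq_right_cont : right_cont0 (fun t => centroid_sq d N (z t)).
Proof.
  apply (cright_cont0_cinner d (fun s => centroid N (z s)) (fun s => centroid N (z s)));
    apply centroid_right_cont.
Qed.

Lemma centroid_sq_derive t : 0 < t ->
  is_derive (fun s => centroid_sq d N (z s)) t
    (order_growth N k0 k1 (centroid_sq d N (z t))
       (fun k => fst (cinner d (centroid N (z t)) (z t k)))
       (fun k => snd (cinner d (centroid N (z t)) (z t k)))).
Proof.
  intros Ht. unfold order_growth.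
  replace (2 / INR N * _) with (2 * fst (cinner d (centroid N (z t))
             (centroid N (fun k => lohe_rhs d N Omega k0 k1 (z t) k)))).
  - apply derive_norm_sq. intros; apply centroid_cderive; auto.
  - rewrite (centroid_velocity_inner d N Omega k0 k1 (z t) Hskew
               (unit_preserved t (Rlt_le _ _ Ht))).
    unfold Rdiv. ring.
Qed.

Lemma centroid_sq_decay r0 : 0 < k0 -> 0 <= k1 -> 0 < r0 -> INR N * (1 - r0) < 2 ->
  r0 * r0 = centroid_sq d N (z 0) ->
  forall t, 0 <= t -> 1 - centroid_sq d N (z t)
    <= (1 - r0 * r0) * exp (- (k0 * (r0 * r0) * (2 - INR N * (1 - r0))) * t).
Proof.
  intros Hk0 Hk1 Hr0 Hdel Hinit.
  set (growth := fun t => order_growth N k0 k1 (centroid_sq d N (z t))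
       (fun k => fst (cinner d (centroid N (z t)) (z t k)))
       (fun k => snd (cinner d (centroid N (z t)) (z t k)))).
  assert (Hb : forall t k, 0 <= t -> (k < N)%nat ->
     fst (cinner d (centroid N (z t)) (z t k)) * fst (cinner d (centroid N (z t)) (z t k))
     + snd (cinner d (centroid N (z t)) (z t k)) * snd (cinner d (centroid N (z t)) (z t k))
     <= centroid_sq d N (z t)).
  { intros t k Ht Hk. apply inner_centroid_bound; auto using unit_preserved. }
  assert (Hmono : forall t, 0 <= t -> r0 * r0 <= centroid_sq d N (z t)).
  { intros t Ht. rewrite Hinit.
    apply (nondecreasing_from_0 _ growth centroid_sq_right_cont centroid_sq_derive); auto.
    intros s Hs. apply order_growth_nonneg; auto; [lra | intros; apply Hb; auto; lra]. }
  rewrite Hinit.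
  apply (gronwall_decay (fun t => 1 - centroid_sq d N (z t)) (fun t => 0 - growth t)).
  - apply right_cont0_minus; [apply right_cont0_const | apply centroid_sq_right_cont].
  - intros t Ht. apply D_minus; [apply D_const | apply centroid_sq_derive; auto].
  - intros t Ht. rewrite <- Hinit.
    assert (Hrate : k0 * (r0 * r0) * (2 - INR N * (1 - r0)) * (1 - centroid_sq d N (z t))
                    <= growth t).
    { apply order_growth_lower; auto.
      - apply Hmono; lra.
      - intros; apply Hb; auto; lra.
      - apply (sum_re_inner_centroid d N (z t) HN). }
    lra.
Qed.

End LoheSolution.

Lemma cnorm_sq d u : cnorm d u * cnorm d u = fst (cinner d u u).
Proof. apply sqrt_sqrt, cinner_self_nonneg. Qed.

Lemma unit_config_of_cnorm d N (x y : nat -> cvec) :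
  (forall k a, (k < N)%nat -> (a < d)%nat -> x k a = y k a) ->
  (forall k, (k < N)%nat -> cnorm d (y k) = 1) -> unit_config d N x.
Proof.
  intros Hxy Hy k Hk. rewrite (cinner_ext d (x k) (y k) (x k) (y k)) by auto.
  rewrite <- cnorm_sq, (Hy k Hk). ring.
Qed.

Lemma cnorm_centroid_ext d N (x y : nat -> cvec) :
  (forall k a, (k < N)%nat -> (a < d)%nat -> x k a = y k a) ->
  cnorm d (centroid N x) = cnorm d (centroid N y).
Proof.
  intros Hxy. unfold cnorm, centroid. do 2 f_equal.
  apply cinner_ext; intros a Ha; f_equal; apply csum_ext; intros; apply Hxy; auto.
Qed.

(* rho0 > (N - 2)/N forces rho0 > 0 (for N = 1, the centroid is the unit vector
   itself) and N (1 - rho0) < 2. *)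
Lemma initial_order_parameter d N (x : nat -> cvec) : (1 <= N)%nat -> unit_config d N x ->
  cnorm d (centroid N x) > (INR N - 2) / INR N ->
  0 < cnorm d (centroid N x) /\ INR N * (1 - cnorm d (centroid N x)) < 2.
Proof.
  intros HN Hunit Hrho. assert (HNp : 0 < INR N) by (apply lt_0_INR; lia).
  assert (Hr : INR N - 2 < INR N * cnorm d (centroid N x)).
  { apply (Rmult_lt_compat_l (INR N)) in Hrho; auto.
    replace (INR N * ((INR N - 2) / INR N)) with (INR N - 2) in Hrho by (field; lra). lra. }
  split; [|lra].
  destruct (Nat.le_gt_cases 2 N) as [H2|H2].
  - apply le_INR in H2. simpl in H2. nra.
  - replace N with 1%nat in * by lia.
    assert (E : cnorm d (centroid 1 x) = cnorm d (x 0%nat)).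
    { unfold cnorm. f_equal. f_equal. apply cinner_ext; intros a Ha;
        unfold centroid; simpl; rewrite Rinv_1; apply injective_projections; simpl; ring. }
    rewrite E. unfold cnorm. rewrite (Hunit 0%nat) by lia. rewrite sqrt_1. lra.
Qed.

Theorem theorem3p4
  (d N : nat) (Omega : nat -> nat -> C) (k0 k1 : R)
  (z0 : nat -> cvec) (z : R -> nat -> cvec) :
  (1 <= N)%nat ->
  skew_hermitian d Omega ->
  0 < k1 -> k1 < k0 / 4 ->
  (forall j, (j < N)%nat -> cnorm d (z0 j) = 1) ->
  cnorm d (centroid N z0) > (INR N - 2) / INR N ->
  (* z is a solution on [0, +oo) with z_j(0) = z_j^0 *)
  (forall j a, (j < N)%nat -> (a < d)%nat -> z 0 j a = z0 j a) ->
  (forall j a, (j < N)%nat -> (a < d)%nat ->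
     filterlim (fun t => z t j a) (at_right 0) (locally (z 0 j a))) ->
  (forall t j a, 0 < t -> (j < N)%nat -> (a < d)%nat ->
     is_derive (fun s => z s j a) t (lohe_rhs d N Omega k0 k1 (z t) j a)) ->
  exists C0 lam, 0 < C0 /\ 0 < lam /\
    forall t, 0 <= t -> forall i j, (i < N)%nat -> (j < N)%nat ->
      Cmod (Cminus (cinner d (z t i) (z t j)) (RtoC 1)) <= C0 * exp (- lam * t) /\
      cnorm d (fun a => Cminus (z t i a) (z t j a)) <= C0 * exp (- lam * t).
Proof.
  intros HN Hskew Hk1 Hk1k0 Hnorm Hrho Hinit Hcont Hder.
  assert (Hk0 : 0 < k0) by lra.
  assert (Hunit0 : unit_config d N (z 0)) by exact (unit_config_of_cnorm d N _ _ Hinit Hnorm).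
  rewrite <- (cnorm_centroid_ext d N (z 0) z0 Hinit) in Hrho.
  set (r0 := cnorm d (centroid N (z 0))) in Hrho.
  destruct (initial_order_parameter d N (z 0) HN Hunit0 Hrho) as [Hr0pos Hgap].
  fold r0 in Hr0pos, Hgap.
  set (lam := k0 * (r0 * r0) * (2 - INR N * (1 - r0))).
  assert (Hlam : 0 < lam)
    by (unfold lam; apply Rmult_lt_0_compat; [apply Rmult_lt_0_compat; nra | lra]).
  assert (HNp : 0 < INR N) by (apply lt_0_INR; lia).
  exists (2 * sqrt (INR N)), (lam / 2).
  split; [assert (0 < sqrt (INR N)) by (apply sqrt_lt_R0; lra); lra|].
  split; [lra|].
  intros t Ht.
  apply (sync_estimates d N (z t)).
  - exact HN.
  - apply (unit_preserved d N Omega k0 k1 z Hskew Hcont Hder Hunit0 t Ht).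
  - left; apply exp_pos.
  - assert (Hdecay := centroid_sq_decay d N Omega k0 k1 z HN Hskew Hcont Hder Hunit0 r0
                        Hk0 (Rlt_le _ _ Hk1) Hr0pos Hgap (cnorm_sq d _) t Ht).
    fold lam in Hdecay.
    rewrite <- exp_plus. replace (- (lam / 2) * t + - (lam / 2) * t) with (- lam * t) by field.
    assert (0 < exp (- lam * t)) by apply exp_pos. nra.
Qed.
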